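(* Let $\mathcal{G}$ be an anonymous polymatrix game, fix an initial joint action $a_0$, a step-size sequence $(\alpha_k)_{k\ge1}$ in $(0,1]$ with $\sum_k\alpha_k=\infty$, $\sum_k\alpha_k^2<\infty$, and a deterministic tie-breaking rule for $\arg\max$. Run fictitious play (FP) and aggregate fictitious play (agg-FP), both from $a_0$ with these step sizes and tie-breaking rule. Then agg-FP converges, i.e. $\lim_{k\to\infty}\inf_{\pi_*\in\mathbb{NE}(\mathcal{G})}\|\hat\gamma_k-\pi_*\|=0$, if and only if FP converges, i.e. $\lim_{k\to\infty}\inf_{\pi_*\in\mathbb{NE}(\mathcal{G})}\|\hat\pi_k-\pi_*\|=0$.
   Context: Polymatrix: $r^i(a^i,a^{-i})=\sum_{j\ne i}r^{ij}(a^i,a^j)$. Anonymous: common action set $\mathbb{A}$ ($|\mathbb{A}|=n$), each $r^i(a^i,a^{-i})$ invariant under permutations of $a^{-i}$; then $r^i(a^i,a^{-i})=\bar r^i(a^i,\sigma(a^{-i}))$ with $\sigma(a^{-i})=\sum_{j\ne i}\mathds{1}\{a^j\}\in\mathbb{X}=\{\xi\in\mathbb{N}^n:\sum_l\xi_l=N-1\}$. $R^i(a^i,\pi^{-i})=\sum_{a^{-i}}r^i(a^i,a^{-i})\prod_{j\ne i}\pi^j(a^j)$, $\bar R^i(a^i,\mu)=\sum_{x}\bar r^i(a^i,x)\mu(x)$. FP: $\hat\pi^j_0=\mathds{1}\{a^j_0\}$, and for $k\ge1$, $\hat\pi^j_k=\hat\pi^j_{k-1}+\alpha_k(\mathds{1}\{a^j_k\}-\hat\pi^j_{k-1})$,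 with actions $a^i_{k+1}\in\arg\max_{a^i}R^i(a^i,\hat\pi^{-i}_k)$ (for $k\ge0$). agg-FP: $\hat\mu^i_0=\mathds{1}\{\sigma(a^{-i}_0)\}$, for $k\ge1$ $\hat\mu^i_k=\hat\mu^i_{k-1}+\alpha_k(\mathds{1}\{\sigma(a^{-i}_k)\}-\hat\mu^i_{k-1})$, actions $a^i_{k+1}\in\arg\max_{a^i}\bar R^i(a^i,\hat\mu^i_k)$, and empirical action frequencies $\hat\gamma^i_0=\mathds{1}\{a^i_0\}$, $\hat\gamma^i_k=\hat\gamma^i_{k-1}+\alpha_k(\mathds{1}\{a^i_k\}-\hat\gamma^i_{k-1})$. $\mathbb{NE}(\mathcal{G})$ is the set of mixed Nash equilibria: profiles $\pi_*$ with $R^i(\pi^i_*,\pi^{-i}_* )\ge R^i(\pi^i,\pi^{-i}_* )$ for all $i$ and $\pi^i\in\Delta(\mathbb{A})$. *)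

From HB Require Import structures.
From mathcomp Require Import all_boot all_order all_algebra.
From mathcomp Require Import all_classical all_reals all_analysis.
From mathcomp Require Import fingroup perm.
Set Implicit Arguments. Unset Strict Implicit. Unset Printing Implicit Defensive.
Import Order.TTheory GRing.Theory Num.Theory.
Import numFieldNormedType.Exports.
Local Open Scope ring_scope.
Local Open Scope classical_set_scope.

Section Game.
Variables (R : realType) (N n : nat).
Definition jact := {ffun 'I_N -> 'I_n}.
Definition rewards := 'I_N -> jact -> R.
Definition profile := 'I_N -> 'I_n -> R.

Definition polymatrix (r : rewards) : Prop :=
  exists rr : 'I_N -> 'I_N -> 'I_n -> 'I_n -> R,
    forall i (a : jact), r i a = \sum_(j | j != i) rr i j (a i) (a j).

Definition anonymous (r : rewards) : Prop :=
  forall i (s : {perm 'I_N}), s i = i ->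
    forall a : jact, r i [ffun j => a (s j)] = r i a.

Definition Rexp (r : rewards) (i : 'I_N) (ai : 'I_n) (pi : profile) : R :=
  \sum_(a : jact | a i == ai) r i a * \prod_(j | j != i) pi j (a j).

Definition Rmix (r : rewards) (i : 'I_N) (pii : 'I_n -> R) (pi : profile) : R :=
  \sum_(ai : 'I_n) pii ai * Rexp r i ai pi.

Definition is_distr (p : 'I_n -> R) : Prop :=
  (forall b, 0 <= p b) /\ \sum_(b : 'I_n) p b = 1.

Definition NE (r : rewards) : set profile :=
  [set pi | (forall i, is_distr (pi i)) /\
            forall i (pii : 'I_n -> R), is_distr pii ->
              Rmix r i (pi i) pi >= Rmix r i pii pi].

(* distance between profiles (l1 norm; all norms on this finite-dim space
   are equivalent) *)
Definition pdist (p q : profile) : R :=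
  \sum_(i : 'I_N) \sum_(b : 'I_n) `|p i b - q i b|.

(* aggregate: counts of the actions of the players other than i;
   X = {xi in N^n : sum xi = N-1} is embedded in {ffun 'I_n -> 'I_N.+1} *)
Definition aggT := {ffun 'I_n -> 'I_N.+1}.
Definition sigma (i : 'I_N) (a : jact) : aggT :=
  [ffun l => inord #|[set j | (j != i) && (a j == l)]|].

(* rbar^i(a^i, x) := r^i(a) for some a with a^i = ai and sigma(a^{-i}) = x;
   well defined by anonymity (0 outside X, where beliefs put no mass) *)
Definition rbar (r : rewards) (i : 'I_N) (ai : 'I_n) (x : aggT) : R :=
  if [pick a : jact | (a i == ai) && (sigma i a == x)] is Some a
  then r i a else 0.

Definition Rbar (r : rewards) (i : 'I_N) (ai : 'I_n) (mu : aggT -> R) : R :=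
  \sum_(x : aggT) rbar r i ai x * mu x.

Definition ind_act (b : 'I_n) : 'I_n -> R := fun c => if c == b then 1 else 0.
Definition ind_agg (y : aggT) : aggT -> R := fun x => if x == y then 1 else 0.

Definition tiebreak := nat -> 'I_N -> {ffun 'I_n -> R} -> 'I_n.
Definition is_argmax_rule (tb : tiebreak) : Prop :=
  forall k i (u : {ffun 'I_n -> R}) (b : 'I_n), u b <= u (tb k i u).

(* Fictitious play: state at step k = (a_k, pihat_k) *)
Fixpoint FP (r : rewards) (tb : tiebreak) (alpha : nat -> R) (a0 : jact)
    (k : nat) : jact * profile :=
  match k with
  | 0 => (a0, fun j => ind_act (a0 j))
  | k'.+1 =>
      let: (_, p) := FP r tb alpha a0 k' in
      let a' : jact := [ffun i => tb k' i [ffun ai => Rexp r i ai p]] in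
      (a', fun j b => p j b + alpha k * (ind_act (a' j) b - p j b))
  end.

Definition FP_belief r tb alpha a0 k := (FP r tb alpha a0 k).2.

(* Aggregate fictitious play: state at step k = (a_k, muhat_k, gammahat_k) *)
Fixpoint aggFP (r : rewards) (tb : tiebreak) (alpha : nat -> R) (a0 : jact)
    (k : nat) : jact * ('I_N -> aggT -> R) * profile :=
  match k with
  | 0 => (a0, fun i => ind_agg (sigma i a0), fun j => ind_act (a0 j))
  | k'.+1 =>
      let: (_, mu, g) := aggFP r tb alpha a0 k' in
      let a' : jact := [ffun i => tb k' i [ffun ai => Rbar r i ai (mu i)]] in
      (a',
       fun i x => mu i x + alpha k * (ind_agg (sigma i a') x - mu i x),
       fun j b => g j b + alpha k * (ind_act (a' j) b - g j b))
  end.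

Definition aggFP_freq r tb alpha a0 k := (aggFP r tb alpha a0 k).2.

Definition converges_to_NE (r : rewards) (p : nat -> profile) : Prop :=
  (fun k => inf [set pdist (p k) q | q in NE r] : R) @ \oo --> (0 : R).

End Game.

From HB Require Import structures.
From mathcomp Require Import all_boot all_order all_algebra.
From mathcomp Require Import all_classical all_reals all_analysis.
From mathcomp Require Import fingroup perm.
From mathcomp Require Import ring.
Set Implicit Arguments. Unset Strict Implicit. Unset Printing Implicit Defensive.
Import Order.TTheory GRing.Theory Num.Theory.
Import numFieldNormedType.Exports.
Local Open Scope ring_scope.
Local Open Scope classical_set_scope.

(* In a polymatrix game the expected reward of player i is affine in each
   opponent's mixed strategy separately, R^i(a^i, pi^-i) = sum_j <r^ij(a^i, .), pi^j>,
   and by anonymity rbar^i(a^i, sigma(a^-i)) = sum_j r^ij(a^i, a^j).  Hence the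
   belief mu^i_k of agg-FP, being a running average of the indicators of
   sigma(a^-i_k), yields Rbar^i(a^i, mu^i_k) = R^i(a^i, pihat^-i_k) as long as
   both processes have played the same actions.  By induction the two processes
   play identical action sequences, so gammahat_k = pihat_k for every k and the
   two convergence statements coincide; no assumption on the step sizes or on
   the tie-breaking rule is needed for this. *)

Lemma count_mem_map_enum (T : finType) (U : eqType) (F : T -> U) x :
  count_mem x (map F (enum T)) = #|[pred j | F j == x]|.
Proof.
rewrite count_map cardE /enum_mem size_filter count_filter.
by apply: eq_count => y; rewrite /= !inE andbT.
Qed.

Section Aggregate.
Variables (N n : nat).
Implicit Types (i : 'I_N) (a b c : jact N n).

Lemma card_others_playing i a l :
  #|[set j | (j != i) && (a j == l)]| = #|[pred j | (j != i) && (a j == l)]|.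
Proof. by apply: eq_card => j; rewrite !inE /in_set unfold_in asboolb. Qed.

Lemma eq_sigma_card i b c l : sigma i b = sigma i c ->
  #|[pred j | (j != i) && (b j == l)]| = #|[pred j | (j != i) && (c j == l)]|.
Proof.
move=> /(congr1 (fun x : aggT N n => val (x l))); rewrite !ffunE /=.
rewrite !card_others_playing.
have card_le_N a : (#|[pred j | (j != i) && (a j == l)]| <= N)%N.
  by apply: leq_trans (max_card _) _; rewrite card_ord.
by rewrite !inordK ?ltnS ?card_le_N.
Qed.

(* Tag each player with whether it is i: equal tagged multisets give a
   permutation fixing i. *)
Lemma eq_sigma_perm i b c : b i = c i -> sigma i b = sigma i c ->
  exists2 s : {perm 'I_N}, s i = i & forall j, c j = b (s j).
Proof.
move=> ebc sbc.
have : perm_eq [tuple (j == i, c j) | j < N] [tuple (j == i, b j) | j < N].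
  apply/allP => -[t l] _; apply/eqP; rewrite /= !count_mem_map_enum.
  case: t.
    apply: eq_card => j /=; rewrite !inE /= !xpair_eqE eqb_id.
    by case: eqP => //= ->; rewrite ebc.
  have tagE a j : ((j == i, a j) == (false, l)) = (j != i) && (a j == l).
    by rewrite xpair_eqE; case: (j == i).
  rewrite (eq_card (tagE c)) (eq_card (tagE b)).
  by apply: eq_sigma_card.
move/tuple_permP => [s /val_inj Hs].
have tagsE j : (j == i, c j) = (s j == i, b (s j)).
  by have := congr1 (fun t : N.-tuple _ => tnth t j) Hs; rewrite !tnth_mktuple.
exists s => [|j]; last by case: (tagsE j).
by have := tagsE i; rewrite eqxx => -[/esym/eqP].
Qed.

Lemma anonymous_sigma (R : realType) (r : rewards R N n) i b c :
  anonymous r -> b i = c i -> sigma i b = sigma i c -> r i b = r i c.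
Proof.
move=> anr ebc sbc; have [s si csE] := eq_sigma_perm ebc sbc.
rewrite -(anr i s si b); congr (r i); apply/ffunP => j.
by rewrite ffunE csE.
Qed.

End Aggregate.

Section Sums.
Variables (R : realType) (N n : nat).

Lemma sum_mul_indicator (I : finType) (F : I -> R) y :
  \sum_x F x * (if x == y then 1 else 0) = F y.
Proof.
rewrite (bigD1 y) //= eqxx mulr1 big1 ?addr0 // => x /negbTE ->.
by rewrite mulr0.
Qed.

Lemma sum_ind_act (b : 'I_n) : \sum_x ind_act R b x = 1.
Proof.
by rewrite -(sum_mul_indicator (fun _ => 1) b); apply: eq_bigr => x _; rewrite mul1r.
Qed.

Lemma sum_mul_update (I : finType) (F G H : I -> R) (al : R) :
  \sum_x F x * (G x + al * (H x - G x)) =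
  (1 - al) * \sum_x F x * G x + al * \sum_x F x * H x.
Proof. by rewrite !mulr_sumr -big_split /=; apply: eq_bigr => x _; ring. Qed.

Lemma sum_jact_marginal (q : 'I_N -> 'I_n -> R) (j : 'I_N) (g : 'I_n -> R) :
  (forall k, k != j -> \sum_b q k b = 1) ->
  \sum_(a : jact N n) g (a j) * \prod_k q k (a k) = \sum_b g b * q j b.
Proof.
move=> q1.
pose qg k x := if k == j then g x * q k x else q k x.
transitivity (\sum_(a : jact N n) \prod_k qg k (a k)).
  apply: eq_bigr => a _; rewrite (bigD1 j) //= [in RHS](bigD1 j) //= /qg eqxx.
  by rewrite mulrA; congr (_ * _); apply: eq_bigr => k /negbTE ->.
rewrite -bigA_distr_bigA (bigD1 j) //= [X in _ * X]big1 ?mulr1.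
  by apply: eq_bigr => b _; rewrite /qg eqxx.
by move=> k kj; rewrite /qg (negbTE kj); apply: q1.
Qed.

End Sums.

Section Polymatrix.
Variables (R : realType) (N n : nat).
Variables (rr : 'I_N -> 'I_N -> 'I_n -> 'I_n -> R) (r : rewards R N n).
Hypothesis r_polymatrix : forall i a, r i a = \sum_(j | j != i) rr i j (a i) (a j).
Hypothesis r_anonymous : anonymous r.

Lemma Rexp_polymatrix i ai (p : profile R N n) :
  (forall j, j != i -> \sum_b p j b = 1) ->
  Rexp r i ai p = \sum_(j | j != i) \sum_b rr i j ai b * p j b.
Proof.
move=> p1; pose q k := if k == i then ind_act R ai else p k.
have -> : Rexp r i ai p = \sum_(a : jact N n) r i a * \prod_k q k (a k).
  rewrite /Rexp big_mkcond; apply: eq_bigr => a _.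
  rewrite [in RHS](bigD1 i) //= /q eqxx /ind_act.
  case: (a i == ai); last by rewrite mul0r mulr0.
  by rewrite mul1r; congr (_ * _); apply: eq_bigr => k /negbTE ->.
under eq_bigr do rewrite r_polymatrix big_distrl.
rewrite exchange_big /=; apply: eq_bigr => j ji.
transitivity (\sum_(a : jact N n) rr i j ai (a j) * \prod_k q k (a k)).
  apply: eq_bigr => a _; rewrite (bigD1 i) //= /q eqxx /ind_act.
  by case: eqP => [->|_]; rewrite ?mul0r ?mulr0.
rewrite sum_jact_marginal; first by apply: eq_bigr => b _; rewrite /q (negbTE ji).
by move=> k kj; rewrite /q; case: eqP => [_|/eqP ki]; [exact: sum_ind_act | exact: p1].
Qed.

Lemma rbar_polymatrix i ai (a : jact N n) :
  rbar r i ai (sigma i a) = \sum_(j | j != i) rr i j ai (a j).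
Proof.
pose c : jact N n := [ffun j => if j == i then ai else a j].
have sigma_c : sigma i c = sigma i a.
  apply/ffunP => l; rewrite !ffunE !card_others_playing; congr inord.
  by apply: eq_card => j; rewrite !inE /= ffunE; case: (j == i).
have r_c : r i c = \sum_(j | j != i) rr i j ai (a j).
  by rewrite r_polymatrix ffunE eqxx; apply: eq_bigr => j /negbTE ji; rewrite ffunE ji.
rewrite /rbar; case: pickP => [b /andP[/eqP bi /eqP sb]|none].
  rewrite -r_c; apply: anonymous_sigma; rewrite ?sb ?sigma_c //.
  by rewrite bi ffunE eqxx.
by have := none c; rewrite sigma_c eqxx andbT ffunE !eqxx.
Qed.

Lemma Rbar_ind_agg i ai (a : jact N n) :
  Rbar r i ai (ind_agg R (sigma i a)) = \sum_(j | j != i) rr i j ai (a j).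
Proof. by rewrite /Rbar /ind_agg sum_mul_indicator rbar_polymatrix. Qed.

Lemma Rexp_ind_act i ai (a : jact N n) :
  Rexp r i ai (fun j => ind_act R (a j)) = \sum_(j | j != i) rr i j ai (a j).
Proof.
rewrite Rexp_polymatrix => [|j _]; last exact: sum_ind_act.
by apply: eq_bigr => j _; rewrite /ind_act sum_mul_indicator.
Qed.

Variables (tb : tiebreak R N n) (alpha : nat -> R) (a0 : jact N n).

Lemma FP_belief_distr k j : \sum_b FP_belief r tb alpha a0 k j b = 1.
Proof.
rewrite /FP_belief; elim: k => [|k IH] /=; first exact: sum_ind_act.
move: IH; case: (FP r tb alpha a0 k) => a p /= p1.
set al := alpha k.+1; set b' := ind_act R _.
have -> : \sum_b (p j b + al * (b' b - p j b)) = \sum_b p j b + al * (\sum_b b' b - \sum_b p j b).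
  by rewrite -sumrB mulr_sumr -big_split.
by rewrite p1 sum_ind_act subrr mulr0 addr0.
Qed.

Lemma aggFP_FP_sync k :
  aggFP_freq r tb alpha a0 k = FP_belief r tb alpha a0 k /\
  forall i ai, Rbar r i ai ((aggFP r tb alpha a0 k).1.2 i) =
               Rexp r i ai (FP_belief r tb alpha a0 k).
Proof.
have p1 k' i j : j != i -> \sum_b FP_belief r tb alpha a0 k' j b = 1.
  by move=> _; apply: FP_belief_distr.
elim: k => [|k IH]; first by split=> // i ai; rewrite Rbar_ind_agg -Rexp_ind_act.
move: IH (p1 k) (p1 k.+1); rewrite /aggFP_freq /FP_belief /=.
case: (aggFP r tb alpha a0 k) => [[a mu] g]; case: (FP r tb alpha a0 k) => a' p /=.
move=> [-> RbarE] p1k p1'.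
have -> : [ffun i => tb k i [ffun ai => Rbar r i ai (mu i)]] =
          [ffun i => tb k i [ffun ai => Rexp r i ai p]].
  by apply/ffunP => i; rewrite !ffunE; congr tb; apply/ffunP => ai; rewrite !ffunE RbarE.
split=> // i ai; rewrite /Rbar sum_mul_update -/(Rbar r i ai (mu i)) RbarE.
rewrite -/(Rbar r i ai (ind_agg R _)) Rbar_ind_agg.
rewrite (Rexp_polymatrix _ (p1k i)) (Rexp_polymatrix _ (p1' i)).
under [in RHS]eq_bigr do rewrite sum_mul_update /ind_act sum_mul_indicator.
by rewrite big_split /= -!mulr_sumr; congr (_ + _ * _).
Qed.

End Polymatrix.

Theorem lemma4 (R : realType) (N n : nat) (r : rewards R N n)
  (a0 : jact N n) (alpha : nat -> R) (tb : tiebreak R N n) :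
  polymatrix r -> anonymous r ->
  (forall k, (1 <= k)%N -> 0 < alpha k <= 1) ->
  (\sum_(1 <= k < m) alpha k) @[m --> \oo] --> +oo ->
  cvg ((\sum_(1 <= k < m) alpha k ^+ 2) @[m --> \oo]) ->
  is_argmax_rule tb ->
  (converges_to_NE r (aggFP_freq r tb alpha a0) <->
   converges_to_NE r (FP_belief r tb alpha a0)).
Proof.
move=> [rr r_polymatrix] r_anonymous _ _ _ _.
have -> : aggFP_freq r tb alpha a0 = FP_belief r tb alpha a0.
  by apply: funext => k; case: (aggFP_FP_sync r_polymatrix r_anonymous tb alpha a0 k).
by [].
Qed.
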